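(* Let $B$ be a Horn program, $E^+,E^-$ finite sets of ground atoms, and $H_1,H_2,H_3\in\mathcal{H}_{D,C}$ hypotheses with $H_3$ a specialization of $H_1$. If $S_{MDL}(H_2,B,E^+,E^-) - S_{MDL}(H_1,B,E^+,E^-) > fp(H_1,B,E^-) - (size(H_3)-size(H_1))$, then $S_{MDL}(H_2,B,E^+,E^-) > S_{MDL}(H_3,B,E^+,E^-)$.
   Context: A definite clause is a clause with exactly one positive literal. A hypothesis is a finite set of definite clauses; $\mathcal{H}_{D,C}$ denotes the hypothesis space of hypotheses consistent with a declaration bias $D$ and hypothesis constraints $C$ (only membership matters). $size(H)$ is the total number of literals in $H$. $B$ is background knowledge, $E^+$ positive and $E^-$ negative examples. For a hypothesis $H$: $tp(H,B,E^+)=|\{e\in E^+ : H\cup B\models e\}|$, $tn(H,B,E^-)=|\{e\in E^- : H\cup B\not\models e\}|$, $fp(H,B,E^-)=|E^-|-tn(H,B,E^-)$, and $S_{MDL}(H,B,E^+,E^-)=tp(H,B,E^+)+tn(H,B,E^-)-size(H)$. A clause $C_1$ subsumes a clause $C_2$ iff there is a substitution $\theta$ with $C_1\theta\subseteq C_2$. A clausal theory $T_1$ subsumes $T_2$ ($T_1\preceq T_2$) iff every clause of $T_2$ is subsumed by some clause of $T_1$. $T_1$ is a generalization of $T_2$ iff $T_1\preceq T_2$, and a specialization of $T_2$ iff $T_2\preceq T_1$. *)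

From Stdlib Require Import List ZArith ClassicalEpsilon.
Import ListNotations.

Inductive term : Type :=
| Var : nat -> term
| Fn : nat -> list term -> term.

Definition atom : Type := (nat * list term)%type.

Inductive literal : Type :=
| Pos : atom -> literal
| Neg : atom -> literal.

(** A clause is a finite set of literals, represented by a duplicate-free
    list; a clausal theory is a finite set of clauses (list). *)
Definition clause : Type := list literal.
Definition theory : Type := list clause.

Fixpoint ground_term (t : term) : Prop :=
  match t with
  | Var _ => False
  | Fn _ args =>
      (fix g (l : list term) : Prop :=
         match l with nil => True | t' :: l' => ground_term t' /\ g l' end) args
  end.

Definition ground_atom (a : atom) : Prop := Forall ground_term (snd a).

Definition is_pos (l : literal) : bool :=
  match l with Pos _ => true | Neg _ => false end.

Definition num_pos (C : clause) : nat := length (filter is_pos C).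

Definition definite_clause (C : clause) : Prop := NoDup C /\ num_pos C = 1%nat.
Definition horn_clause (C : clause) : Prop := NoDup C /\ (num_pos C <= 1)%nat.

(** A finite set of clauses: no two listed clauses denote the same set. *)
Definition set_like (T : theory) : Prop :=
  NoDup T /\
  forall C D, In C T -> In D T -> (forall l, In l C <-> In l D) -> C = D.

Definition hypothesis_wf (H : theory) : Prop :=
  set_like H /\ Forall definite_clause H.

Definition horn_program (B : theory) : Prop :=
  set_like B /\ Forall horn_clause B.

Definition size (H : theory) : nat := fold_right (fun C n => length C + n)%nat 0%nat H.

Fixpoint subst_term (th : nat -> term) (t : term) : term :=
  match t with
  | Var n => th n
  | Fn f args => Fn f (map (subst_term th) args)
  end.

Definition subst_atom (th : nat -> term) (a : atom) : atom :=
  (fst a, map (subst_term th) (snd a)).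

Definition subst_lit (th : nat -> term) (l : literal) : literal :=
  match l with
  | Pos a => Pos (subst_atom th a)
  | Neg a => Neg (subst_atom th a)
  end.

Definition clause_subsumes (C1 C2 : clause) : Prop :=
  exists th : nat -> term, forall l, In l C1 -> In (subst_lit th l) C2.

Definition theory_subsumes (T1 T2 : theory) : Prop :=
  forall C2, In C2 T2 -> exists C1, In C1 T1 /\ clause_subsumes C1 C2.

Definition specialization (T2 T1 : theory) : Prop := theory_subsumes T1 T2.

Record structure : Type := {
  dom : Type;
  dom_inhabited : dom;
  fint : nat -> list dom -> dom;
  pint : nat -> list dom -> Prop
}.

Fixpoint teval (M : structure) (s : nat -> dom M) (t : term) : dom M :=
  match t with
  | Var n => s n
  | Fn f args => fint M f (map (teval M s) args)
  end.

Definition atom_holds (M : structure) (s : nat -> dom M) (a : atom) : Prop :=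
  pint M (fst a) (map (teval M s) (snd a)).

Definition lit_holds (M : structure) (s : nat -> dom M) (l : literal) : Prop :=
  match l with
  | Pos a => atom_holds M s a
  | Neg a => ~ atom_holds M s a
  end.

Definition clause_true (M : structure) (C : clause) : Prop :=
  forall s : nat -> dom M, exists l, In l C /\ lit_holds M s l.

Definition is_model (M : structure) (T : theory) : Prop :=
  forall C, In C T -> clause_true M C.

Definition entails (T : theory) (e : atom) : Prop :=
  forall M : structure, is_model M T -> forall s : nat -> dom M, atom_holds M s e.

Definition countP {A : Type} (P : A -> Prop) (l : list A) : nat :=
  length (filter (fun x => if excluded_middle_informative (P x) then true else false) l).

Definition tp (H B : theory) (Ep : list atom) : nat :=
  countP (fun e => entails (H ++ B) e) Ep.

Definition tn (H B : theory) (En : list atom) : nat :=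
  countP (fun e => ~ entails (H ++ B) e) En.

Definition fp (H B : theory) (En : list atom) : Z :=
  (Z.of_nat (length En) - Z.of_nat (tn H B En))%Z.

Definition S_MDL (H B : theory) (Ep En : list atom) : Z :=
  (Z.of_nat (tp H B Ep) + Z.of_nat (tn H B En) - Z.of_nat (size H))%Z.

Definition ground_examples (E : list atom) : Prop := NoDup E /\ Forall ground_atom E.

(* If H1 subsumes H3 then every model of H1 is a model of H3, so whatever
   H3 ∪ B entails is already entailed by H1 ∪ B; hence tp(H3) <= tp(H1).
   Together with tn(H3) <= |E-| = tn(H1) + fp(H1) this gives
   S(H3) <= S(H1) + fp(H1) - (size(H3) - size(H1)) < S(H2). *)
From Stdlib Require Import List ZArith Lia ClassicalEpsilon.

Fixpoint teval_subst_term (M : structure) (s : nat -> dom M) (th : nat -> term)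
    (t : term) {struct t} :
  teval M s (subst_term th t) = teval M (fun n => teval M s (th n)) t.
Proof.
  destruct t as [n | f args]; simpl.
  - reflexivity.
  - f_equal. rewrite map_map.
    induction args as [|a args IH]; simpl.
    + reflexivity.
    + rewrite teval_subst_term. f_equal. exact IH.
Qed.

Lemma atom_holds_subst (M : structure) (s : nat -> dom M) (th : nat -> term) (a : atom) :
  atom_holds M s (subst_atom th a) <-> atom_holds M (fun n => teval M s (th n)) a.
Proof.
  destruct a as [p args]. unfold atom_holds, subst_atom; simpl.
  rewrite map_map.
  rewrite (map_ext _ _ (teval_subst_term M s th)).
  reflexivity.
Qed.

Lemma lit_holds_subst (M : structure) (s : nat -> dom M) (th : nat -> term) (l : literal) :
  lit_holds M s (subst_lit th l) <-> lit_holds M (fun n => teval M s (th n)) l.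
Proof.
  destruct l as [a | a]; simpl; rewrite atom_holds_subst; reflexivity.
Qed.

Lemma clause_true_subsumes (M : structure) (C1 C2 : clause) :
  clause_subsumes C1 C2 -> clause_true M C1 -> clause_true M C2.
Proof.
  intros [th Hth] HC1 s.
  destruct (HC1 (fun n => teval M s (th n))) as [l [Hl Hls]].
  exists (subst_lit th l). split.
  - exact (Hth l Hl).
  - apply lit_holds_subst. exact Hls.
Qed.

Lemma is_model_subsumes (M : structure) (T1 T2 : theory) :
  theory_subsumes T1 T2 -> is_model M T1 -> is_model M T2.
Proof.
  intros Hsub HT1 C2 HC2.
  destruct (Hsub C2 HC2) as [C1 [HC1 HC12]].
  exact (clause_true_subsumes M C1 C2 HC12 (HT1 C1 HC1)).
Qed.

Lemma is_model_app (M : structure) (T1 T2 : theory) :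
  is_model M (T1 ++ T2) <-> is_model M T1 /\ is_model M T2.
Proof.
  split.
  - intros H. split; intros C HC; apply H, in_or_app; auto.
  - intros [H1 H2] C HC. apply in_app_or in HC as [HC | HC]; auto.
Qed.

Lemma entails_app_subsumes (T1 T2 B : theory) (e : atom) :
  theory_subsumes T1 T2 -> entails (T2 ++ B) e -> entails (T1 ++ B) e.
Proof.
  intros Hsub He M HM.
  apply He. apply is_model_app in HM as [HT1 HB].
  apply is_model_app. split; [exact (is_model_subsumes M T1 T2 Hsub HT1) | exact HB].
Qed.

Lemma countP_mono {A : Type} (P Q : A -> Prop) (l : list A) :
  (forall x, P x -> Q x) -> countP P l <= countP Q l.
Proof.
  intros HPQ. unfold countP. induction l as [|a l IH]; simpl; [lia|].
  destruct (excluded_middle_informative (P a)) as [p|p];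
  destruct (excluded_middle_informative (Q a)) as [q|q]; simpl; try lia.
  exfalso; auto.
Qed.

Lemma countP_le_length {A : Type} (P : A -> Prop) (l : list A) : countP P l <= length l.
Proof. apply filter_length_le. Qed.

Lemma tp_subsumes (T1 T2 B : theory) (Ep : list atom) :
  theory_subsumes T1 T2 -> tp T2 B Ep <= tp T1 B Ep.
Proof.
  intros Hsub. apply countP_mono. intros e. apply entails_app_subsumes. exact Hsub.
Qed.

Lemma tn_le_length (H B : theory) (En : list atom) : tn H B En <= length En.
Proof. apply countP_le_length. Qed.

Lemma S_MDL_specialization_le (B : theory) (Ep En : list atom) (H1 H3 : theory) :
  specialization H3 H1 ->
  (S_MDL H3 B Ep En <=
     S_MDL H1 B Ep En + fp H1 B En - (Z.of_nat (size H3) - Z.of_nat (size H1)))%Z.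
Proof.
  intros Hspec.
  pose proof (tp_subsumes H1 H3 B Ep Hspec).
  pose proof (tn_le_length H3 B En).
  unfold S_MDL, fp. lia.
Qed.

Theorem proposition4p11
  (HS : theory -> Prop) (B : theory) (Ep En : list atom) (H1 H2 H3 : theory) :
  horn_program B ->
  ground_examples Ep -> ground_examples En ->
  HS H1 -> HS H2 -> HS H3 ->
  hypothesis_wf H1 -> hypothesis_wf H2 -> hypothesis_wf H3 ->
  specialization H3 H1 ->
  (S_MDL H2 B Ep En - S_MDL H1 B Ep En >
     fp H1 B En - (Z.of_nat (size H3) - Z.of_nat (size H1)))%Z ->
  (S_MDL H2 B Ep En > S_MDL H3 B Ep En)%Z.
Proof.
  intros _ _ _ _ _ _ _ _ _ Hspec Hgap.
  pose proof (S_MDL_specialization_le B Ep En H1 H3 Hspec).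
  lia.
Qed.
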